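(* Assume $D\le\tfrac12$. Let $\pi^*$ be the naive AM strategy with $\pi^*_m=\dfrac{e_m-d_m}{1-D}$ for every $m\in\mathcal M$ (the strategy called Undefended). Then the M strategy $\rho^*$ with $\rho^*_m=1$ for all $m\in\mathcal M$ (always attack) is a best response of M to $\pi^*$, and $u_{AM}(\pi^*,\rho^* )=D$. Moreover $u_{AM}(\pi,\rho)\le D$ for every AM strategy $\pi$ and every M strategy $\rho$; hence $(\pi^*,\rho^* )$ is an AM-optimal equilibrium among all AM strategies, in which AM protects every machine it defends.
   Context: Let $\mathcal M$ be a finite nonempty set of machine (environment) types. Let $e\in[0,1]^{\mathcal M}$ with $\sum_{r\in\mathcal M}e_r=1$ ($e_r$ is the fraction of all real machines that are of type $r$), and $d\in[0,1]^{\mathcal M}$ with $0\le d_r\le e_r$ ($d_r$ is the fraction of all real machines that are of type $r$ and defended by the anti-malware AM); put $D=\sum_{r}d_r$. An AM strategy $\pi$ assigns to each real machine type $r\in\mathcal M$ a vector $\pi^r\in[0,1]^{\mathcal M}$ with $\sum_{m}\pi^r_m\le 1$ ($\pi^r_m$ is the probability that AM creates a sandbox of type $m$ on a defended real machine of type $r$; with probability $1-\sum_m\pi^r_m$ no sandbox is created). AM's strategy is naive if $\pi^r$ does not depend on $r$; then we write $\pi_m$ for $\pi^r_m$. A malware (M) strategy is a vector $\rho\in[0,1]^{\mathcal M}$ ($\rho_m$ is the probability M attacks when it perceives environment $m$). The utilities are $$u_M(\pi,\rho)=\sum_{r\in\mathcal M}\Big[(e_r-d_r)\rho_r+d_r\Big(1-\sum_{m\in\mathcal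 M}\pi^r_m\rho_m\Big)\rho_r\Big],$$ $$u_{AM}(\pi,\rho)=\sum_{r\in\mathcal M}d_r\Big[\sum_{m\in\mathcal M}\big(\pi^r_m\rho_m+\pi^r_m(1-\rho_m)(1-\rho_r)\big)+\Big(1-\sum_{m\in\mathcal M}\pi^r_m\Big)(1-\rho_r)\Big].$$ A best response of M to $\pi$ is any $\rho\in\arg\max_{\hat\rho\in[0,1]^{\mathcal M}}u_M(\pi,\hat\rho)$. A pair $(\pi,\rho)$ with $\rho$ a best response to $\pi$ is an equilibrium; it is AM-optimal within a class of AM strategies if $\pi$ lies in the class and $u_{AM}(\pi,\rho)\ge u_{AM}(\pi',\rho')$ for every equilibrium $(\pi',\rho')$ with $\pi'$ in the class. *)

From mathcomp Require Import all_boot all_order all_algebra.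
Set Implicit Arguments. Unset Strict Implicit. Unset Printing Implicit Defensive.
Import Order.TTheory GRing.Theory Num.Theory.
Local Open Scope ring_scope.

(* Machine types: a finite type M.  e r, d r : fractions of machines.
   An AM strategy pi : M -> M -> R, with  pi r m = pi^r_m
   (r = real machine type, m = sandbox type). *)

Section Game.
Variables (R : realFieldType) (M : finType) (e d : M -> R).

Definition Dtot : R := \sum_(r : M) d r.

Definition is_AMstrat (pi : M -> M -> R) : Prop :=
  forall r, (forall m, 0 <= pi r m <= 1) /\ \sum_(m : M) pi r m <= 1.

Definition naive (pi : M -> M -> R) : Prop :=
  forall r r' m, pi r m = pi r' m.

Definition is_Mstrat (rho : M -> R) : Prop := forall m, 0 <= rho m <= 1.

Definition uM (pi : M -> M -> R) (rho : M -> R) : R :=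
  \sum_(r : M) ((e r - d r) * rho r
                + d r * (1 - \sum_(m : M) pi r m * rho m) * rho r).

Definition uAM (pi : M -> M -> R) (rho : M -> R) : R :=
  \sum_(r : M) d r *
    (\sum_(m : M) (pi r m * rho m + pi r m * (1 - rho m) * (1 - rho r))
     + (1 - \sum_(m : M) pi r m) * (1 - rho r)).

Definition best_response (pi : M -> M -> R) (rho : M -> R) : Prop :=
  is_Mstrat rho /\ forall rho', is_Mstrat rho' -> uM pi rho' <= uM pi rho.

Definition equilibrium (pi : M -> M -> R) (rho : M -> R) : Prop :=
  best_response pi rho.

Definition AM_optimal (cls : (M -> M -> R) -> Prop)
    (pi : M -> M -> R) (rho : M -> R) : Prop :=
  cls pi /\ equilibrium pi rho /\
  forall pi' rho', cls pi' -> equilibrium pi' rho' -> uAM pi' rho' <= uAM pi rho.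

End Game.

From mathcomp Require Import all_boot all_order all_algebra.
From mathcomp Require Import ring lra.
Import Order.TTheory GRing.Theory Num.Theory.
Local Open Scope ring_scope.

(* On a defended machine AM scores at most 1, so [uAM <= D] for every profile;
   [D] is reached as soon as AM always creates a sandbox and M always attacks.
   Against the Undefended sandbox distribution [c = (e - d) / (1 - D)] an
   attack rate vector [rho] earns M the amount [(1 - D) S + (1 - S) T], with
   [S = sum_m c_m rho_m <= 1] and [T = sum_r d_r rho_r <= D <= 1 - D]; this is
   at most [1 - D], the payoff of always attacking. *)

Section Payoffs.
Variables (R : realFieldType) (M : finType).

Lemma sandbox_payoff_le1 (p rho : M -> R) (x : R) :
  (forall m, 0 <= p m) -> \sum_m p m <= 1 -> is_Mstrat rho -> 0 <= x <= 1 ->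
  \sum_m (p m * rho m + p m * (1 - rho m) * (1 - x))
    + (1 - \sum_m p m) * (1 - x) <= 1.
Proof.
move=> p_ge0 sum_p_le1 rhoP /andP[x_ge0 x_le1].
have caught_le : \sum_m (p m * rho m + p m * (1 - rho m) * (1 - x))
                 <= \sum_m p m.
  apply: ler_sum => m _; have /andP[rho_ge0 rho_le1] := rhoP m.
  have miss_ge0 : 0 <= p m * (1 - rho m) by apply: mulr_ge0 => //; lra.
  have : p m * (1 - rho m) * (1 - x) <= p m * (1 - rho m).
    by rewrite -[leRHS]mulr1 ler_wpM2l //; lra.
  lra.
have : (1 - \sum_m p m) * (1 - x) <= 1 - \sum_m p m.
  by rewrite -[leRHS]mulr1 ler_wpM2l //; lra.
lra.
Qed.

Lemma uAM_le_Dtot (d : M -> R) pi rho :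
  (forall r, 0 <= d r) -> is_AMstrat pi -> is_Mstrat rho ->
  uAM d pi rho <= Dtot d.
Proof.
move=> d_ge0 piP rhoP; apply: ler_sum => r _; have [pi_r sum_pi_r] := piP r.
rewrite -[leRHS]mulr1 ler_wpM2l // sandbox_payoff_le1 //.
by move=> m; have /andP[] := pi_r m.
Qed.

Lemma uAM_always_attack (d : M -> R) pi :
  (forall r, \sum_m pi r m = 1) -> uAM d pi (fun _ => 1) = Dtot d.
Proof.
move=> sum_pi; apply: eq_bigr => r _; rewrite subrr !mulr0 addr0.
under eq_bigr do rewrite mulr1 mulr0 addr0.
by rewrite sum_pi mulr1.
Qed.

Lemma uM_naive (e d c rho : M -> R) :
  uM e d (fun _ => c) rho =
  \sum_r (e r - d r) * rho r
    + (1 - \sum_m c m * rho m) * \sum_r d r * rho r.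
Proof.
rewrite /uM big_split /= mulr_sumr; congr (_ + _).
by apply: eq_bigr => r _; ring.
Qed.

Lemma is_AMstrat_distribution (c : M -> R) :
  (forall m, 0 <= c m) -> \sum_m c m = 1 -> is_AMstrat (fun _ => c).
Proof.
move=> c_ge0 sum_c _; split; last by rewrite sum_c.
move=> m; rewrite c_ge0 -sum_c (bigD1 m) //= lerDl.
by apply: sumr_ge0 => i _.
Qed.

Lemma weighted_sum_le_sum (w rho : M -> R) :
  (forall m, 0 <= w m) -> is_Mstrat rho -> \sum_m w m * rho m <= \sum_m w m.
Proof.
move=> w_ge0 rhoP; apply: ler_sum => m _; have /andP[_ rho_le1] := rhoP m.
by rewrite -[leRHS]mulr1 ler_wpM2l.
Qed.

End Payoffs.

Section Undefended.
Variables (R : realFieldType) (M : finType) (e d : M -> R).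
Hypotheses (sum_e : \sum_r e r = 1) (dP : forall r, 0 <= d r <= e r)
           (D_le_half : Dtot d <= 2^-1).

Definition undefended (m : M) : R := (e m - d m) / (1 - Dtot d).

(* [2^-1] parses as [2 ^- 1], i.e. [(2 ^+ 1)^-1], which [lra] does not read. *)
Let D_le_1half : Dtot d <= 1 / 2. Proof. by rewrite mul1r. Qed.

Let one_sub_D_gt0 : 0 < 1 - Dtot d. Proof. have := D_le_1half; lra. Qed.

Lemma undefended_ge0 m : 0 <= undefended m.
Proof.
have /andP[_ d_le_e] := dP m.
by apply: divr_ge0; [rewrite subr_ge0 | exact: ltW].
Qed.

Lemma sum_undefended : \sum_m undefended m = 1.
Proof. by rewrite -mulr_suml sumrB sum_e divff ?gt_eqF. Qed.

Lemma is_AMstrat_undefended : is_AMstrat (fun _ => undefended).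
Proof. exact: is_AMstrat_distribution undefended_ge0 sum_undefended. Qed.

Lemma uM_undefended rho :
  uM e d (fun _ => undefended) rho =
  (1 - Dtot d) * \sum_m undefended m * rho m
    + (1 - \sum_m undefended m * rho m) * \sum_r d r * rho r.
Proof.
rewrite uM_naive; congr (_ + _); rewrite mulr_sumr; apply: eq_bigr => m _.
by rewrite /undefended mulrA mulrCA divff ?mulr1 ?gt_eqF.
Qed.

Lemma uM_undefended_always_attack :
  uM e d (fun _ => undefended) (fun _ => 1) = 1 - Dtot d.
Proof.
rewrite uM_undefended; under eq_bigr do rewrite mulr1.
by rewrite sum_undefended subrr mul0r addr0 mulr1.
Qed.

Lemma always_attack_best_response :
  best_response e d (fun _ => undefended) (fun _ => 1).
Proof.
split=> [m|rho rhoP]; first by rewrite ler01 lexx.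
rewrite uM_undefended_always_attack uM_undefended.
set S := \sum_m _ * rho m; set T := \sum_r _ * rho r.
have S_le1 : S <= 1.
  by rewrite -sum_undefended weighted_sum_le_sum //; exact: undefended_ge0.
have T_le_D : T <= Dtot d.
  by apply: weighted_sum_le_sum => // r; have /andP[] := dP r.
have : (1 - S) * T <= (1 - S) * (1 - Dtot d).
  by rewrite ler_wpM2l //; have := D_le_1half; lra.
lra.
Qed.

Lemma uAM_undefended_always_attack :
  uAM d (fun _ => undefended) (fun _ => 1) = Dtot d.
Proof. by apply: uAM_always_attack => _; exact: sum_undefended. Qed.

End Undefended.

Theorem theorem3 (R : realFieldType) (M : finType) (e d : M -> R) :
  (exists m0 : M, True) ->
  (forall r, 0 <= e r <= 1) ->
  \sum_(r : M) e r = 1 ->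
  (forall r, 0 <= d r <= e r) ->
  Dtot d <= 2^-1 ->
  let pistar : M -> M -> R := fun _ m => (e m - d m) / (1 - Dtot d) in
  let rhostar : M -> R := fun _ => 1 in
  [/\ is_AMstrat pistar /\ naive pistar,
      best_response e d pistar rhostar,
      uAM d pistar rhostar = Dtot d,
      (forall pi rho, is_AMstrat pi -> is_Mstrat rho -> uAM d pi rho <= Dtot d)
    & AM_optimal e d (@is_AMstrat R M) pistar rhostar].
Proof.
move=> _ _ sum_e dP D_le_half pistar rhostar.
have d_ge0 r : 0 <= d r by have /andP[] := dP r.
have bound pi rho : is_AMstrat pi -> is_Mstrat rho -> uAM d pi rho <= Dtot d.
  exact: uAM_le_Dtot.
have AMstar : is_AMstrat pistar by exact: is_AMstrat_undefended.
have BR : best_response e d pistar rhostar.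
  exact: always_attack_best_response.
have value : uAM d pistar rhostar = Dtot d.
  exact: uAM_undefended_always_attack.
split=> //; split=> //; split=> // pi rho piP [rhoP _].
by rewrite value; exact: bound.
Qed.
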